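(* In the setting described in the context, assume $q$ is a square, let $d=q-\sqrt q+1$ and $t=(q^2+q+1)/d$. Then $t=q+\sqrt q+1$ and $w_u\le 2$ for every $u$. Moreover, for $j=0,1,2$, the number $v_j$ of indices $u\in\{0,\dots,t-1\}$ with $w_u=j$ is $v_0=\frac12(q+\sqrt q)$, $v_1=\sqrt q+1$, $v_2=\frac12(q-\sqrt q)$.
   Context: Let $q=p^h$ with $p$ prime, $h\ge1$. Let $\alpha$ be a primitive element of $\mathbb{F}_{q^3}$; the points of $PG(2,q)$ are the 1-dimensional $\mathbb{F}_q$-subspaces of $\mathbb{F}_{q^3}$, and $P_i$ denotes the point represented by $\alpha^i$, so $PG(2,q)=\{P_0,\dots,P_{q^2+q}\}$. Let $\tau:P_i\mapsto P_{ip\bmod(q^2+q+1)}$ (a collineation) and let $\ell_0$ be a line of $PG(2,q)$ fixed by $\tau$. For a positive divisor $t$ of $q^2+q+1$ and $i=0,\dots,t-1$ let $O_i=\{P_u:u\equiv i\pmod t\}$, and for $u=0,\dots,t-1$ let $w_u=|\ell_0\cap O_u|$. *)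

From mathcomp Require Import all_boot all_order all_algebra all_field.
Set Implicit Arguments. Unset Strict Implicit. Unset Printing Implicit Defensive.
Import GRing.Theory.
Local Open Scope ring_scope.

(* Elements of the subfield F_q of L are exactly the c with c^q = c. *)
(* A line of PG(2,q), modelled in F_{q^3}: a 2-dimensional F_q-subspace of L,
   i.e. a subset containing 0, closed under addition and under multiplication
   by scalars of F_q, and of cardinality q^2. *)
Definition is_line (L : finFieldType) (q : nat) (S : {set L}) : Prop :=
  [/\ 0 \in S,
      (forall x y, x \in S -> y \in S -> x + y \in S),
      (forall c x, c ^+ q = c -> x \in S -> c * x \in S)
    & #|S| = (q ^ 2)%N].

(* The collineation tau : P_i |-> P_{ip} is induced by the Frobenius x |-> x^p;
   the line S is fixed by tau iff its image under Frobenius is S. *)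
Definition tau_fixed (L : finFieldType) (p : nat) (S : {set L}) : Prop :=
  [set x ^+ p | x in S] = S.

(* w_u = |l cap O_u| = number of i in {0,...,q^2+q} with i = u (mod t)
   and P_i on l, i.e. alpha^i in l. *)
Definition w (L : finFieldType) (q : nat) (alpha : L) (S : {set L}) (t u : nat)
  : nat :=
  #|[set i : 'I_(q ^ 2 + q + 1) | (i %% t == u)%N && (alpha ^+ i \in S)]|.

(* Collinearity in PG(2,q) is linearity over F_q = {c | c^q = c} inside L = F_(q^3), and the
   points of l are the P_i, i < N := q^2 + q + 1, with alpha^i in l.  There are q + 1 of them and,
   since any two lines meet, every nonzero residue mod N is exactly once the difference of the
   indices of two of them (a Singer difference set).  For q = r^2 the number t = q + r + 1 divides
   N, so counting the points of l by their index mod t gives sum_u w_u = q + 1 and, through the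
   difference property, sum_u w_u^2 = (q + 1) + (N/t - 1).
   No three points of l lie in one class: the ratios y, z of their representatives lie in the
   subgroup of L^* of index t, of order (r - 1)(r^3 + 1); writing z = c1 + c2 y with c1, c2 in
   F_q, the element A = c1^r c2 y and its conjugate A^(r^3) have sum and product fixed by
   x |-> x^r, so A, hence y, lies in F_q and two of the points coincide.  Thus w_u <= 2, and the
   two moment identities determine v_0, v_1 and v_2. *)

From mathcomp Require Import all_boot all_order all_algebra all_field zify ring.
Set Implicit Arguments. Unset Strict Implicit. Unset Printing Implicit Defensive.

Lemma card_ord_predE n (P : pred nat) : #|[set i : 'I_n | P i]| = \sum_(i < n) P i.
Proof. by rewrite -sum1_card big_mkcond /=; apply: eq_bigr => i _; rewrite inE; case: (P i). Qed.

Lemma sum_dvdn_mul T k : 0 < T -> \sum_(0 <= e < T * k) (T %| e) = k.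
Proof.
move=> T_gt0; elim: k => [|k IHk]; first by rewrite muln0 big_geq.
rewrite mulnS addnC (big_cat_nat _ (leq_addr T _)) //= IHk -{1}[T * k]add0n big_addn addKn.
rewrite big_ltn // add0n dvdn_mulr // big1_seq ?addn0 ?addn1 // => e.
rewrite mem_index_iota dvdn_addl ?dvdn_mulr // => /andP[_ /andP[e_gt0 eT]].
by rewrite gtnNdvd.
Qed.

Lemma predn_cube_factor q : (q ^ 3).-1 = (q ^ 2 + q + 1) * (q - 1).
Proof. by case: q => // q; nia. Qed.

Lemma sqr_period_factor r : (r ^ 2) ^ 2 + r ^ 2 + 1 = (r ^ 2 + r + 1) * (r ^ 2 - r + 1).
Proof. by case: r => // r; nia. Qed.

Lemma predn_sqr_cube_factor r :
  ((r ^ 2) ^ 3).-1 = (r ^ 2 + r + 1) * ((r - 1) * (r ^ 3 + 1)).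
Proof. by case: r => // r; nia. Qed.

Section CyclicDifferenceSet.
Variables (N : nat) (P : nat -> bool).
Hypotheses (N_gt0 : 0 < N) (P_mod : forall i, P (i %% N) = P i).

Lemma big_ord_rotate (F : nat -> nat) i :
  \sum_(j < N) F j = \sum_(e < N) F ((i + e) %% N).
Proof.
pose rot (e : 'I_N) : 'I_N := Ordinal (ltn_pmod (i + e) N_gt0).
have rot_inj : injective rot.
  move=> a b /(congr1 val) /eqP; rewrite /= eqn_modDl !modn_small //.
  by move/eqP/val_inj.
by rewrite (reindex_inj rot_inj).
Qed.

Lemma sum_periodic k : \sum_(0 <= i < N * k) P i = k * \sum_(i < N) P i.
Proof.
elim: k => [|k IHk]; first by rewrite muln0 big_geq.
rewrite mulnS addnC (big_cat_nat _ (leq_addr N _)) //= IHk mulSn addnC.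
rewrite -{1}[N * k]add0n big_addn addKn big_mkord; congr (_ + _).
by apply: eq_bigr => i _; rewrite -P_mod addnC mulnC modnMDl P_mod.
Qed.

Local Notation k := (\sum_(i < N) P i).

Definition diff_count e := \sum_(i < N) P i * P (i + e).

Lemma diff_count0 : diff_count 0 = k.
Proof. by apply: eq_bigr => i _; rewrite addn0; case: (P i). Qed.

Lemma sum_diff_count : \sum_(e < N) diff_count e = k * k.
Proof.
rewrite exchange_big big_distrl /=; apply: eq_bigr => i _.
rewrite -big_distrr /=; congr (_ * _).
by rewrite (big_ord_rotate (fun j => P j) i); apply: eq_bigr => e _; rewrite P_mod.
Qed.

Lemma diff_count_eq1 : N + k = k * k + 1 -> (forall e, 0 < diff_count e) ->
  forall e, 0 < e < N -> diff_count e = 1.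
Proof.
move=> Nk diff_gt0 e /andP[e_gt0 eN].
pose o := Ordinal N_gt0.
have sum_excess : \sum_(e < N | e != o) (diff_count e - 1) = 0.
  rewrite sumnB; last by move=> *; apply: diff_gt0.
  rewrite sum1_card cardC1 card_ord.
  have := sum_diff_count; rewrite (bigD1 o) //= diff_count0.
  by move: Nk; move: (\sum_(i < N | i != o) _) k => rest k'; lia.
have /eqP := sum_excess; rewrite sum_nat_eq0 => /forallP/(_ (Ordinal eN))/implyP.
rewrite -val_eqE /= -lt0n e_gt0 subn_eq0 => /(_ isT) diff_le1.
by apply/eqP; rewrite eqn_leq diff_le1 diff_gt0.
Qed.

Definition class_count T u := \sum_(i < N) (i %% T == u) * P i.

Lemma sum_class_count T : 0 < T -> \sum_(u < T) class_count T u = k.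
Proof.
move=> T_gt0; rewrite exchange_big; apply: eq_bigr => i _ /=.
rewrite (bigD1 (Ordinal (ltn_pmod i T_gt0))) //= eqxx mul1n big1 ?addn0 // => u.
by rewrite -val_eqE eq_sym /= => /negbTE->.
Qed.

Lemma sum_class_count_sqrE T : 0 < T ->
  \sum_(u < T) class_count T u ^ 2 =
    \sum_(i < N) \sum_(j < N) (i %% T == j %% T) * (P i * P j).
Proof.
move=> T_gt0; rewrite (eq_bigr (fun u : 'I_T => \sum_(i < N) \sum_(j < N)
    (i %% T == u) * P i * ((j %% T == u) * P j))); last first.
  by move=> u _; rewrite expnS expn1 big_distrl; apply: eq_bigr => i _; rewrite big_distrr.
rewrite exchange_big; apply: eq_bigr => i _ /=.
rewrite exchange_big; apply: eq_bigr => j _ /=.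
rewrite (bigD1 (Ordinal (ltn_pmod i T_gt0))) //= eqxx big1 ?addn0.
  by rewrite eq_sym; case: (_ == _); case: (P i); case: (P j).
by move=> u; rewrite -val_eqE eq_sym /= => /negbTE->.
Qed.

Lemma sum_class_count_sqr T : 0 < T -> T %| N ->
    (forall e, 0 < e < N -> diff_count e = 1) ->
  \sum_(u < T) class_count T u ^ 2 = k + (N %/ T).-1.
Proof.
move=> T_gt0 TN diff1.
have shifted (i : 'I_N) : \sum_(j < N) (i %% T == j %% T) * (P i * P j) =
    \sum_(e < N) (T %| e) * (P i * P (i + e)).
  rewrite (big_ord_rotate (fun j => (i %% T == j %% T) * (P i * P j)) i).
  apply: eq_bigr => e _ /=.
  by rewrite (modn_dvdm _ TN) -{1}[nat_of_ord i]addn0 eqn_modDl mod0n P_mod eq_sym.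
rewrite sum_class_count_sqrE // (eq_bigr _ (fun i _ => shifted i)) exchange_big /=.
under eq_bigr do rewrite -big_distrr /= -/(diff_count _).
pose o := Ordinal N_gt0.
rewrite (bigD1 o) //= dvdn0 mul1n diff_count0; congr (_ + _).
rewrite (eq_bigr (fun e : 'I_N => (T %| e) : nat)); last first.
  by move=> e; rewrite -val_eqE /= -lt0n => e_gt0; rewrite diff1 ?muln1 // e_gt0 ltn_ord.
have := sum_dvdn_mul (N %/ T) T_gt0; rewrite mulnC divnK // big_mkord (bigD1 o) //=.
by rewrite dvdn0 add1n => <-.
Qed.

End CyclicDifferenceSet.

Lemma count_values_le2 (f : nat -> nat) n : (forall u, u < n -> f u <= 2) ->
  let c j := count (fun u => f u == j) (iota 0 n) in
  [/\ n = c 0 + c 1 + c 2, \sum_(u < n) f u = c 1 + 2 * c 2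
    & \sum_(u < n) f u ^ 2 = c 1 + 4 * c 2].
Proof.
elim: n => [|n IHn] f_le2 c; first by rewrite /c !big_ord0.
have [|size_n sum_n sqr_n] := IHn => [u ltun|]; first by rewrite f_le2 // ltnW.
rewrite /c !big_ord_recr -[in iota _ _]addn1 iotaD !count_cat /=.
have := f_le2 n (ltnSn n); case: (f n) => [|[|[|]]] //= _; rewrite sum_n sqr_n; split; lia.
Qed.

Import GRing.Theory.
Local Open Scope ring_scope.

Section PowFixed.
Variables (L : finFieldType) (n : nat).
Hypothesis pchar_n : [pchar L].-nat n.

Definition pow_fixed (c : L) := c ^+ n == c.

Lemma exprBn_pchar (x y : L) : (x - y) ^+ n = x ^+ n - y ^+ n.
Proof. by rewrite exprDn_pchar // exprNn_pchar. Qed.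

Lemma pow_fixed0 : pow_fixed 0.
Proof. by rewrite /pow_fixed expr0n; case: n pchar_n. Qed.

Lemma pow_fixed1 : pow_fixed 1.
Proof. by rewrite /pow_fixed expr1n. Qed.

Lemma pow_fixedD c d : pow_fixed c -> pow_fixed d -> pow_fixed (c + d).
Proof. by rewrite /pow_fixed exprDn_pchar // => /eqP-> /eqP->. Qed.

Lemma pow_fixedN c : pow_fixed c -> pow_fixed (- c).
Proof. by rewrite /pow_fixed exprNn_pchar // => /eqP->. Qed.

Lemma pow_fixedM c d : pow_fixed c -> pow_fixed d -> pow_fixed (c * d).
Proof. by rewrite /pow_fixed exprMn => /eqP-> /eqP->. Qed.

Lemma pow_fixedV c : pow_fixed c -> pow_fixed c^-1.
Proof. by rewrite /pow_fixed exprVn => /eqP->. Qed.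

Lemma pow_fixedX c k : pow_fixed c -> pow_fixed (c ^+ k).
Proof. by rewrite /pow_fixed -exprM mulnC exprM => /eqP->. Qed.

Lemma pow_fixed_unit c : pow_fixed c -> c != 0 -> c ^+ n.-1 = 1.
Proof.
move=> /eqP cn c_neq0; apply: (mulfI c_neq0).
by rewrite -exprS mulr1 prednK // lt0n; case: n pchar_n cn.
Qed.

End PowFixed.

Section FrobeniusSquare.
Variables (L : finFieldType) (r : nat).
Hypothesis pchar_r : [pchar L].-nat r.

Lemma root_quadratic_pow_fixed (a a' : L) :
  pow_fixed r (a + a') -> pow_fixed r (a * a') -> pow_fixed (r * r) a.
Proof.
move=> /eqP sum_fixed /eqP prod_fixed; rewrite /pow_fixed exprM.
have r_gt0 : (0 < r)%N by case/andP: pchar_r.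
have : (a ^+ r - a) * (a ^+ r - a') = (a * a - (a + a') * a + a * a') ^+ r.
  by rewrite exprDn_pchar // exprBn_pchar // prod_fixed !exprMn sum_fixed; ring.
have -> : a * a - (a + a') * a + a * a' = 0 by ring.
rewrite expr0n gtn_eqF //.
move/eqP; rewrite mulf_eq0 !subr_eq0 => /orP[] /eqP ar; first by rewrite !ar.
rewrite ar; have -> : a' = (a + a') - a by ring.
by rewrite exprBn_pchar // sum_fixed -ar addrK.
Qed.

Lemma pow_fixed_sqr_expr3 (c : L) : pow_fixed (r * r) c -> c ^+ (r ^ 3) = c ^+ r.
Proof. by move=> /eqP cF; rewrite !expnS expn0 muln1 mulnA exprM cF. Qed.

Lemma pow_fixed_sqr_exprS (c : L) : pow_fixed (r * r) c -> pow_fixed r (c ^+ (r + 1)).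
Proof.
by move=> /eqP cF; rewrite /pow_fixed -exprM mulnDl mul1n exprD cF mulrC addn1 exprSr.
Qed.

Lemma pow_fixed_norm (x : L) : x ^+ ((r - 1) * (r ^ 3 + 1)) = 1 -> pow_fixed r (x ^+ (r ^ 3 + 1)).
Proof.
have r_gt0 : (0 < r)%N by case/andP: pchar_r.
move=> xE; rewrite /pow_fixed -[X in _ ^+ X == _](subnK r_gt0) exprD expr1.
by rewrite -exprM mulnC xE mul1r.
Qed.

Lemma affine_subgroup_pow_fixed (y z c1 c2 : L) :
    pow_fixed (r * r) c1 -> pow_fixed (r * r) c2 -> c1 != 0 -> c2 != 0 ->
    y ^+ ((r - 1) * (r ^ 3 + 1)) = 1 -> z ^+ ((r - 1) * (r ^ 3 + 1)) = 1 ->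
    z = c1 + c2 * y ->
  pow_fixed (r * r) y.
Proof.
move=> c1F c2F c1_neq0 c2_neq0 /pow_fixed_norm yN /pow_fixed_norm zN z_def.
have pchar_r3 : [pchar L].-nat (r ^ 3)%N by rewrite pnatX pchar_r.
(* [A] and [A ^+ r^3] are the roots of a quadratic over F_r. *)
pose A := c1 ^+ r * c2 * y.
have A_conj : A ^+ (r ^ 3) = c1 * c2 ^+ r * y ^+ (r ^ 3).
  rewrite !exprMn (pow_fixed_sqr_expr3 c2F) -exprM mulnC exprM (pow_fixed_sqr_expr3 c1F).
  by rewrite -exprM (eqP c1F).
have A_sum : A + A ^+ (r ^ 3) = z ^+ (r ^ 3 + 1) - c1 ^+ (r + 1)
    - c2 ^+ (r + 1) * y ^+ (r ^ 3 + 1).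
  rewrite A_conj z_def (exprD _ (r ^ 3) 1) exprDn_pchar // exprMn.
  by rewrite (pow_fixed_sqr_expr3 c1F) (pow_fixed_sqr_expr3 c2F) /A !exprD !expr1; ring.
have A_prod : A * A ^+ (r ^ 3) = c1 ^+ (r + 1) * c2 ^+ (r + 1) * y ^+ (r ^ 3 + 1).
  by rewrite A_conj /A !exprD !expr1; ring.
have AF : pow_fixed (r * r) A.
  apply: (root_quadratic_pow_fixed (a' := A ^+ (r ^ 3))).
    by rewrite A_sum !pow_fixedD ?pow_fixedN ?pow_fixedM ?pow_fixed_sqr_exprS.
  by rewrite A_prod !pow_fixedM ?pow_fixed_sqr_exprS.
have -> : y = A / (c1 ^+ r * c2) by rewrite /A mulrC mulKf // mulf_neq0 ?expf_neq0.
have pchar_rr : [pchar L].-nat (r * r)%N by rewrite pnatM pchar_r.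
apply: pow_fixedM => //; apply/pow_fixedV/pow_fixedM => //; exact: pow_fixedX.
Qed.

End FrobeniusSquare.

Section SingerCycle.
Variables (L : finFieldType) (q : nat) (alpha : L).
Hypotheses (q_gt1 : (1 < q)%N) (pchar_q : [pchar L].-nat q)
  (cardL : #|L| = (q ^ 3)%N) (alpha_prim : (q ^ 3).-1.-primitive_root alpha).

Local Notation N := (q ^ 2 + q + 1)%N.
Local Notation M := (q ^ 3).-1.

Lemma singer_period_gt0 : (0 < N)%N.
Proof. by rewrite addn1. Qed.

Lemma alpha_expr_neq0 k : alpha ^+ k != 0.
Proof.
have M_gt0 : (0 < M)%N.
  by rewrite predn_cube_factor muln_gt0 singer_period_gt0 subn_gt0.
apply: expf_neq0; apply: contra_eq_neq (prim_expr_order alpha_prim) => ->.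
by rewrite expr0n gtn_eqF // eq_sym oner_eq0.
Qed.

Lemma alpha_expr_onto x : x != 0 -> exists2 m, (m < M)%N & x = alpha ^+ m.
Proof.
move=> x_neq0; have : x ^+ M = 1.
  apply: (mulfI x_neq0); rewrite -exprS mulr1 prednK; first by rewrite -cardL expf_card.
  by rewrite expn_gt0 ltnW.
by case/(prim_rootP alpha_prim) => m ->; exists m.
Qed.

Lemma pow_fixed_alpha_exprN k : pow_fixed q (alpha ^+ (N * k)).
Proof.
rewrite /pow_fixed -exprM (eq_prim_root_expr alpha_prim) predn_cube_factor.
have -> : (N * k * q = k * (N * (q - 1)) + N * k)%N by nia.
by rewrite modnMDl.
Qed.

Lemma eqn_mod_mul_pred a b :
  (a * (q - 1) == b * (q - 1) %[mod M])%N = (a == b %[mod N])%N.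
Proof. by rewrite predn_cube_factor -!muln_modl eqn_pmul2r // subn_gt0. Qed.

Lemma alpha_expr_neq_scale a b c : (a < N)%N -> (b < N)%N -> a != b ->
  pow_fixed q c -> alpha ^+ b != c * alpha ^+ a.
Proof.
move=> aN bN ab cF; apply/eqP => ba.
have c_neq0 : c != 0 by apply: contra_eq_neq ba => ->; rewrite mul0r alpha_expr_neq0.
move/(congr1 (fun x => x ^+ (q - 1))): ba.
rewrite exprMn subn1 (pow_fixed_unit pchar_q cF c_neq0) mul1r -!exprM -subn1 => /eqP.
by rewrite (eq_prim_root_expr alpha_prim) eqn_mod_mul_pred !modn_small // eq_sym (negbTE ab).
Qed.

Lemma card_pow_fixed : #|[set c : L | pow_fixed q c]| = q.
Proof.
pose g (k : 'I_(q - 1)) := alpha ^+ (N * k).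
have g_inj : injective g.
  move=> k1 k2 /eqP; rewrite (eq_prim_root_expr alpha_prim) predn_cube_factor.
  rewrite -!muln_modr !modn_small // eqn_pmul2l ?singer_period_gt0 //.
  by move/eqP/val_inj.
have nonzero_fixed : [set c : L | pow_fixed q c] :\ 0 = g @: setT.
  apply/setP => c; rewrite !inE; apply/andP/imsetP => [[c_neq0 cF]|[k _ ->]].
    have [m mM cE] := alpha_expr_onto c_neq0.
    have /eqP mN : (m == 0 %[mod N])%N.
      rewrite -eqn_mod_mul_pred mul0n -(eq_prim_root_expr alpha_prim) expr0 exprM -cE.
      by rewrite subn1 (pow_fixed_unit pchar_q).
    rewrite mod0n in mN.
    have mdivN : (m %/ N < q - 1)%N.
      by rewrite ltn_divLR ?singer_period_gt0 // mulnC -predn_cube_factor.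
    exists (Ordinal mdivN) => //; rewrite /g /= cE.
    by rewrite {1}(divn_eq m N) mN addn0 mulnC.
  by rewrite alpha_expr_neq0 pow_fixed_alpha_exprN.
have := cardsD1 0 [set c : L | pow_fixed q c].
rewrite nonzero_fixed card_imset // cardsT card_ord inE pow_fixed0 // add1n subn1.
by rewrite prednK // ltnW.
Qed.

Variable l : {set L}.
Hypothesis l_line : is_line q l.

Lemma line0 : 0 \in l. Proof. by case: l_line. Qed.

Lemma lineD x y : x \in l -> y \in l -> x + y \in l.
Proof. by case: l_line => _ + _ _; apply. Qed.

Lemma lineZ c x : pow_fixed q c -> x \in l -> c * x \in l.
Proof. by case: l_line => _ _ + _ /eqP; apply. Qed.

Lemma lineB x y : x \in l -> y \in l -> x - y \in l.
Proof.
move=> xl yl; rewrite lineD // -mulN1r lineZ //.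
exact/(pow_fixedN pchar_q)/pow_fixed1.
Qed.

Lemma lineZ_eq c x : pow_fixed q c -> c != 0 -> (c * x \in l) = (x \in l).
Proof.
move=> cF c_neq0; apply/idP/idP => [cxl|]; last exact: lineZ.
by rewrite -(mulKf c_neq0 x) lineZ // pow_fixedV.
Qed.

Lemma card_line : #|l| = (q ^ 2)%N. Proof. by case: l_line. Qed.

Definition on_line i := alpha ^+ i \in l.

Lemma on_line_mod i : on_line (i %% N) = on_line i.
Proof.
rewrite /on_line [in RHS](divn_eq i N) exprD mulnC.
by rewrite lineZ_eq ?pow_fixed_alpha_exprN ?alpha_expr_neq0.
Qed.

Lemma sum_on_line : (\sum_(i < N) on_line i = q + 1)%N.
Proof.
have line_nonzero : l :\ 0 = [set alpha ^+ m | m : 'I_M in [set m : 'I_M | on_line m]].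
  apply/setP => x; rewrite !inE; apply/andP/imsetP => [[x_neq0 xl]|[m]].
    have [m mM x_eq] := alpha_expr_onto x_neq0.
    by exists (Ordinal mM); rewrite ?inE /on_line -x_eq.
  by rewrite inE => ml ->; rewrite alpha_expr_neq0.
have alpha_expr_inj : injective (fun m : 'I_M => alpha ^+ m).
  move=> a b /eqP; rewrite (eq_prim_root_expr alpha_prim) !modn_small //.
  by move/eqP/val_inj.
have := cardsD1 0 l; rewrite line0 card_line line_nonzero card_imset //.
rewrite (card_ord_predE _ on_line).
have -> : (\sum_(m < M) on_line m = \sum_(0 <= m < N * (q - 1)) on_line m)%N.
  by rewrite big_mkord -predn_cube_factor.
rewrite (sum_periodic on_line_mod) => sum_eq; apply/eqP.
by rewrite -(eqn_pmul2l (_ : 0 < q - 1)%N) ?subn_gt0 //; apply/eqP; nia.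
Qed.

Lemma line_span a b z : (a < N)%N -> (b < N)%N -> a != b ->
    on_line a -> on_line b -> z \in l ->
  exists c1 c2, [/\ pow_fixed q c1, pow_fixed q c2 & z = c1 * alpha ^+ a + c2 * alpha ^+ b].
Proof.
move=> aN bN ab al bl zl.
pose Fq := [set c : L | pow_fixed q c].
pose comb (c : L * L) := c.1 * alpha ^+ a + c.2 * alpha ^+ b.
have comb_inj : {in setX Fq Fq &, injective comb}.
  move=> [c1 c2] [d1 d2]; rewrite !inE /comb /= => /andP[c1F c2F] /andP[d1F d2F] eq_comb.
  have eq_diff : (c2 - d2) * alpha ^+ b = (d1 - c1) * alpha ^+ a.
    apply/eqP; rewrite -subr_eq0.
    have -> : (c2 - d2) * alpha ^+ b - (d1 - c1) * alpha ^+ a =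
      (c1 * alpha ^+ a + c2 * alpha ^+ b) - (d1 * alpha ^+ a + d2 * alpha ^+ b) by ring.
    by rewrite eq_comb subrr.
  have [c2d2|c2d2] := eqVneq c2 d2.
    move: eq_diff; rewrite c2d2 subrr mul0r => /esym/eqP.
    by rewrite mulf_eq0 (negbTE (alpha_expr_neq0 _)) orbF subr_eq0 => /eqP->.
  have cF : pow_fixed q ((d1 - c1) / (c2 - d2)).
    by apply: pow_fixedM; [apply: pow_fixedD|apply/pow_fixedV/pow_fixedD]; rewrite ?pow_fixedN.
  have := alpha_expr_neq_scale aN bN ab cF.
  by rewrite mulrAC -eq_diff mulrAC mulfV ?mul1r ?eqxx // subr_eq0.
have /eqP comb_onto : comb @: setX Fq Fq == l.
  rewrite eqEcard card_in_imset // cardsX card_pow_fixed card_line leqnn andbT.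
  apply/subsetP => x /imsetP[[c1 c2]]; rewrite !inE => /andP[c1F c2F] ->.
  by rewrite lineD ?lineZ.
move: zl; rewrite -comb_onto => /imsetP[[c1 c2]]; rewrite !inE => /andP[c1F c2F] ->.
by exists c1, c2.
Qed.

Lemma line_meets_shift e :
  exists2 z : L, z != 0 & (z \in l) && (alpha ^+ e * z \in l).
Proof.
have [/existsP[z /and3P[z_neq0 zl ezl]]|no_common] :=
  boolP [exists z : L, [&& z != 0, z \in l & alpha ^+ e * z \in l]].
  by exists z; rewrite ?zl.
(* Otherwise this map would embed [l * l], of size q^4, into [L]. *)
pose f (u : L * L) := alpha ^+ e * u.1 - u.2.
have f_inj : {in setX l l &, injective f}.
  move=> [u1 u2] [v1 v2]; rewrite !inE /f /= => /andP[u1l u2l] /andP[v1l v2l] eq_f.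
  have eq_diff : alpha ^+ e * (u1 - v1) = u2 - v2.
    apply/eqP; rewrite -subr_eq0.
    have -> : alpha ^+ e * (u1 - v1) - (u2 - v2) =
      (alpha ^+ e * u1 - u2) - (alpha ^+ e * v1 - v2) by ring.
    by rewrite eq_f subrr.
  have /eqP uv : u1 - v1 == 0.
    apply: contraNT no_common => uv_neq0; apply/existsP; exists (u1 - v1).
    by rewrite uv_neq0 eq_diff !lineB.
  move: eq_diff; rewrite uv mulr0 => /esym/eqP; rewrite !subr_eq0 => /eqP->.
  by move/eqP: uv; rewrite subr_eq0 => /eqP->.
have := max_card (mem (f @: setX l l)).
rewrite card_in_imset // cardsX card_line cardL -expnD leq_exp2l //.
Qed.

Lemma line_diff_count e : (0 < e < N)%N -> diff_count N on_line e = 1%N.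
Proof.
apply: (diff_count_eq1 singer_period_gt0 on_line_mod) => [|e'].
  by rewrite sum_on_line; nia.
have [z z_neq0 /andP[zl ezl]] := line_meets_shift e'.
have [m _ z_eq] := alpha_expr_onto z_neq0.
rewrite /diff_count (bigD1 (Ordinal (ltn_pmod m singer_period_gt0))) //=.
rewrite -[on_line (m %% N + e')]on_line_mod modnDml !on_line_mod.
by rewrite /on_line exprD mulrC -z_eq zl ezl.
Qed.

Lemma class_count_card t u :
  class_count N on_line t u = #|[set i : 'I_N | ((i %% t == u) && on_line i)%N]|.
Proof.
rewrite (card_ord_predE _ (fun i => ((i %% t == u) && on_line i)%N)).
by apply: eq_bigr => i _; case: (on_line i); rewrite ?andbT ?andbF ?muln1 ?muln0.
Qed.

Variable r : nat.
Hypothesis q_sq : q = (r ^ 2)%N.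

Local Notation T := (q + r + 1)%N.
Local Notation E := ((r - 1) * (r ^ 3 + 1))%N.

Lemma order_mul_class_period : M = (T * E)%N.
Proof. by rewrite q_sq predn_sqr_cube_factor. Qed.

Lemma class_ratio_order a b : (a = b %[mod T])%N -> (alpha ^+ b / alpha ^+ a) ^+ E = 1.
Proof.
move=> ab; rewrite exprMn exprVn -!exprM.
have -> : alpha ^+ (b * E) = alpha ^+ (a * E).
  by apply/eqP; rewrite (eq_prim_root_expr alpha_prim) order_mul_class_period -!muln_modl ab.
by rewrite mulfV // alpha_expr_neq0.
Qed.

Lemma class_no_three_on_line i j k : (i < N)%N -> (j < N)%N -> (k < N)%N ->
    i != j -> i != k -> j != k -> (i = j %[mod T])%N -> (i = k %[mod T])%N ->
  on_line i -> on_line j -> on_line k -> False.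
Proof.
move=> iN jN kN ij ik jk ijT ikT il jl kl.
have pchar_r : [pchar L].-nat r by apply: pnat_dvd pchar_q; rewrite q_sq dvdn_exp.
have [c1 [c2 [c1F c2F k_eq]]] := line_span iN jN ij il jl kl.
have c1_neq0 : c1 != 0.
  apply: contraTneq (alpha_expr_neq_scale jN kN jk c2F) => c1_0.
  by rewrite k_eq c1_0 mul0r add0r eqxx.
have c2_neq0 : c2 != 0.
  apply: contraTneq (alpha_expr_neq_scale iN kN ik c1F) => c2_0.
  by rewrite k_eq c2_0 mul0r addr0 eqxx.
have ai_neq0 := alpha_expr_neq0 i.
have : pow_fixed q (alpha ^+ j / alpha ^+ i).
  have q_rr : q = (r * r)%N by rewrite mulnn.
  rewrite q_rr in c1F c2F *.
  apply: (affine_subgroup_pow_fixed pchar_r c1F c2F c1_neq0 c2_neq0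
    (class_ratio_order ijT) (class_ratio_order ikT)).
  by rewrite k_eq mulrDl -!mulrA mulfV // mulr1.
by move/(alpha_expr_neq_scale iN jN ij); rewrite mulfVK // eqxx.
Qed.

Lemma class_count_le2 u : (class_count N on_line T u <= 2)%N.
Proof.
rewrite leqNgt class_count_card; apply/negP => /card_gt2P[i [j [k [[]]]]]; rewrite !inE.
move=> /andP[/eqP iu il] /andP[/eqP ju jl] /andP[/eqP ku kl] [ij jk ki].
apply: (class_no_three_on_line (ltn_ord i) (ltn_ord j) (ltn_ord k)) => //.
- by rewrite eq_sym.
- by rewrite iu ju.
- by rewrite iu ku.
Qed.

Lemma singer_period_factor : N = (T * (q - r + 1))%N.
Proof. by rewrite q_sq sqr_period_factor. Qed.

Lemma sum_class_count_line : (\sum_(u < T) class_count N on_line T u = q + 1)%N.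
Proof. by rewrite sum_class_count ?sum_on_line // addn1. Qed.

Lemma sum_class_count_line_sqr :
  (\sum_(u < T) class_count N on_line T u ^ 2 = q + 1 + (q - r))%N.
Proof.
rewrite sum_class_count_sqr ?sum_on_line //.
- by rewrite singer_period_factor mulKn ?addn1 // addnK.
- exact: singer_period_gt0.
- exact: on_line_mod.
- by rewrite addn1.
- by rewrite singer_period_factor dvdn_mulr.
- exact: line_diff_count.
Qed.

Lemma class_count_values :
  let v (j : nat) := count (fun u : nat => class_count N on_line T u == j) (iota 0 T) in
  [/\ v 0%N = (q + r)./2, v 1%N = (r + 1)%N & v 2%N = (q - r)./2].
Proof.
have r_le_q : (r <= q)%N by rewrite q_sq; case: (r) => // r'; rewrite expnS leq_pmulr.
have [size_eq sum_eq sqr_eq] := count_values_le2 (n := T) (fun u _ => class_count_le2 u).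
rewrite sum_class_count_line in sum_eq; rewrite sum_class_count_line_sqr in sqr_eq.
by split; lia.
Qed.

End SingerCycle.

Theorem proposition8 (p h q r : nat) (L : finFieldType) (alpha : L)
  (l : {set L}) :
  prime p -> (0 < h)%N -> q = (p ^ h)%N -> q = (r ^ 2)%N ->
  #|L| = (q ^ 3)%N ->
  ((q ^ 3).-1.-primitive_root alpha)%R ->
  is_line q l -> tau_fixed p l ->
  let d := (q - r + 1)%N in
  let t := ((q ^ 2 + q + 1) %/ d)%N in
  [/\ (d * t = q ^ 2 + q + 1)%N /\ t = (q + r + 1)%N,
      (forall u, (u < t)%N -> (w q alpha l t u <= 2)%N),
      count (fun u => w q alpha l t u == 0)%N (iota 0 t) = ((q + r)./2)%N,
      count (fun u => w q alpha l t u == 1)%N (iota 0 t) = (r + 1)%N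
    & count (fun u => w q alpha l t u == 2)%N (iota 0 t) = ((q - r)./2)%N].
Proof.
move=> p_prime h_gt0 q_def q_sq cardL alpha_prim l_line _ d t.
have q_gt1 : (1 < q)%N by rewrite q_def -(expn0 p) ltn_exp2l ?prime_gt1.
have pchar_q : [pchar L].-nat q.
  have pchar_p : p \in [pchar L].
    by apply: (card_finPcharP (n := (h * 3)%N)); rewrite // cardL q_def expnM.
  by rewrite q_def pnatX pnatE // pchar_p.
have t_eq : t = (q + r + 1)%N.
  by rewrite /t /d (singer_period_factor q_sq) mulnK // addn1.
have w_eq u : w q alpha l t u = class_count (q ^ 2 + q + 1) (on_line alpha l) t u.
  by rewrite class_count_card.
have le2 := class_count_le2 q_gt1 pchar_q cardL alpha_prim l_line q_sq.
have [v0 v1 v2] := class_count_values q_gt1 pchar_q cardL alpha_prim l_line q_sq.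
rewrite t_eq in w_eq *; rewrite -v0 -v1 -v2.
split; first by rewrite mulnC -(singer_period_factor q_sq).
- by move=> u _; rewrite w_eq.
all: by apply: eq_count => u; rewrite w_eq.
Qed.
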